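(* Let $K$ be a field of characteristic $0$, let $E$ be the infinite-dimensional unitary Grassmann algebra over $K$ with even part $E_0$, and let $A=\begin{pmatrix} E_0 & E\\ 0 & E\end{pmatrix}$. Let $n\geq 1$, let $u_0,\dots,u_{n+1},v_1,v_2,w_1,\dots,w_{2n}\in K\langle X\rangle$ and $\sigma\in S_{2n}$, and set \[f=u_0[v_1,v_2]u_1[w_{\sigma(1)},w_{\sigma(2)}]u_2\cdots u_n[w_{\sigma(2n-1)},w_{\sigma(2n)}]u_{n+1}.\] Then \[f-(-1)^{\sigma}u_0[v_1,v_2][w_1,w_2]\cdots[w_{2n-1},w_{2n}]u_1u_2\cdots u_{n+1}\in T(A).\]
   Context: All algebras are associative and unitary over $K$; $K\langle X\rangle$ is the free unitary associative algebra on $X=\{x_1,x_2,\dots\}$, and $T(A)$ is the ideal of polynomial identities of $A$. $E$ is generated by anticommuting $e_1,e_2,\dots$ and $E_0$ is the span of basis products $e_{i_1}\cdots e_{i_k}$ ($i_1<\dots<i_k$) of even length $k$. $[a,b]=ab-ba$, and $(-1)^\sigma$ is the sign of $\sigma$. *)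

From HB Require Import structures.
From mathcomp Require Import all_boot all_order all_algebra all_fingroup.
From mathcomp Require Import finmap.
Set Implicit Arguments. Unset Strict Implicit. Unset Printing Implicit Defensive.
Import Order.TTheory GRing.Theory.
Local Open Scope fset_scope.
Local Open Scope ring_scope.

(* Polynomials are represented by (noncommutative) expressions; membership in T(A)
   only depends on the element of K<X> they denote, since it is defined via
   evaluation (i.e. via the algebra homomorphisms K<X> -> A). *)
Inductive ncpoly (K : Type) : Type :=
  | NVar of nat
  | NConst of K
  | NAdd of ncpoly K & ncpoly K
  | NOpp of ncpoly K
  | NMul of ncpoly K & ncpoly K.
Arguments NVar {K}.

Definition ncsub (K : Type) (p q : ncpoly K) := NAdd p (NOpp q).
Definition nccomm (K : Type) (p q : ncpoly K) := ncsub (NMul p q) (NMul q p).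
Definition ncprod (K : ringType) (s : seq (ncpoly K)) : ncpoly K :=
  foldr (@NMul K) (NConst 1) s.

(* An element of E is given by its coordinates on the basis
   e_S = e_{i_1} ... e_{i_k}  (S = {i_1 < ... < i_k} a finite subset of nat). *)
Section Grassmann.
Variable K : fieldType.

Definition gr := {fset nat} -> K.

(* e_T e_U = (-1)^{#{(t,u) in T x U | u < t}} e_{T cup U} for disjoint T, U *)
Definition gsign (T U : {fset nat}) : K :=
  (-1) ^+ (\sum_(t <- T) count (fun u => u < t)%N U)%N.

Definition gmul (a b : gr) : gr := fun S =>
  \sum_(T <- fpowerset S) gsign T (S `\` T) * a T * b (S `\` T).
Definition gadd (a b : gr) : gr := fun S => a S + b S.
Definition gopp (a : gr) : gr := fun S => - a S.
Definition gzero : gr := fun _ => 0.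
Definition gscal (c : K) : gr := fun S => if S == fset0 then c else 0.

Definition gfin (a : gr) : Prop :=
  exists N : nat, forall S : {fset nat}, a S != 0 -> forall i, i \in S -> (i < N)%N.
Definition geven (a : gr) : Prop :=
  forall S : {fset nat}, a S != 0 -> ~~ odd #|` S|.

(* ((a, b), c) stands for the matrix [[a, b], [0, c]] *)
Definition algA := (gr * gr * gr)%type.

Definition inA (x : algA) : Prop :=
  [/\ gfin x.1.1, geven x.1.1, gfin x.1.2 & gfin x.2].

Definition Aadd (x y : algA) : algA :=
  ((gadd x.1.1 y.1.1, gadd x.1.2 y.1.2), gadd x.2 y.2).
Definition Aopp (x : algA) : algA := ((gopp x.1.1, gopp x.1.2), gopp x.2).
Definition Amul (x y : algA) : algA :=
  ((gmul x.1.1 y.1.1, gadd (gmul x.1.1 y.1.2) (gmul x.1.2 y.2)), gmul x.2 y.2).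
Definition Aconst (c : K) : algA := ((gscal c, gzero), gscal c).
Definition Azero : algA := ((gzero, gzero), gzero).

Fixpoint Aeval (phi : nat -> algA) (p : ncpoly K) : algA :=
  match p with
  | NVar i => phi i
  | NConst c => Aconst c
  | NAdd p q => Aadd (Aeval phi p) (Aeval phi q)
  | NOpp p => Aopp (Aeval phi p)
  | NMul p q => Amul (Aeval phi p) (Aeval phi q)
  end.

Definition TA (f : ncpoly K) : Prop :=
  forall phi : nat -> algA, (forall i, inA (phi i)) -> Aeval phi f = Azero.

End Grassmann.

(* In E, elements of even degree are central and elements of odd degree
   anticommute.  Hence a commutator [x, y] equals 2 x' y', where x', y' are the
   odd parts, so it is even and central; and a product of the commutators of
   the odd parts of w_sigma(1), ..., w_sigma(2n) is (-1)^sigma times the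
   unpermuted one.  In A, the (1,1) entry of [v1, v2] is a commutator in the
   commutative algebra E_0, hence 0, so u0 [v1, v2] X only depends on the
   (2,2) entry of X, which is a product in E where this reordering applies. *)

From HB Require Import structures.
From mathcomp Require Import all_boot all_order all_algebra all_fingroup.
From mathcomp Require Import finmap.
From mathcomp Require Import boolp ring zify.
Set Implicit Arguments. Unset Strict Implicit. Unset Printing Implicit Defensive.
Import Order.TTheory GRing.Theory.
Local Open Scope fset_scope.
Local Open Scope ring_scope.

(** * Sums over finite sets of indices *)

Lemma perm_fsetU_cat (I : choiceType) (A B : {fset I}) :
  [disjoint A & B] -> perm_eq (A `|` B) (A ++ B).
Proof.
move=> /fdisjointP dAB; apply: uniq_perm; rewrite ?fset_uniq //.
- rewrite cat_uniq !fset_uniq andbT /=; apply/hasPn => x xB.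
  by apply: contraL xB; apply: dAB.
- by move=> x; rewrite mem_cat in_fsetU.
Qed.

Lemma fdisjointDl (I : choiceType) (A B : {fset I}) : [disjoint A `\` B & B].
Proof. by apply/fdisjointP => x; rewrite in_fsetD => /andP[]. Qed.

Section FpowersetSums.
Variables (I : choiceType) (R : nmodType).

Lemma big_fpowerset_compl (S : {fset I}) (F : {fset I} -> R) :
  \sum_(T <- fpowerset S) F T = \sum_(T <- fpowerset S) F (S `\` T).
Proof.
rewrite -(big_map (fsetD S) predT F); apply/perm_big/uniq_perm.
- exact: fset_uniq.
- rewrite map_inj_in_uniq ?fset_uniq // => U V; rewrite !fpowersetE => sUS sVS eUV.
  by rewrite -(fsetDK sUS) eUV fsetDK.
- move=> T; rewrite fpowersetE; apply/idP/mapP => [sTS | [U _ ->]].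
    by exists (S `\` T); rewrite ?fpowersetE ?fsubsetDl ?fsetDK.
  exact: fsubsetDl.
Qed.

Lemma big_fpowerset_sub (S T : {fset I}) (F : {fset I} -> R) : T `<=` S ->
  \sum_(U <- fpowerset T) F U = \sum_(U <- fpowerset S | U `<=` T) F U.
Proof.
move=> sTS; rewrite [RHS]big_fset_condE; apply: eq_fbigl => U.
rewrite !inE /= !fpowersetE.
by case: (boolP (U `<=` T)) => sUT; rewrite ?andbT ?andbF ?(fsubset_trans sUT sTS).
Qed.

Lemma big_fpowerset_sup (S T : {fset I}) (F : {fset I} -> R) : T `<=` S ->
  \sum_(U <- fpowerset S | T `<=` U) F U =
  \sum_(V <- fpowerset (S `\` T)) F (T `|` V).
Proof.
move=> sTS; rewrite -big_filter -(big_map (fsetU T) predT F).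
have UDK V : [disjoint V & T] -> (T `|` V) `\` T = V.
  by move=> dVT; rewrite fsetDUl fsetDv fset0U; apply/fsetDidPl.
apply/perm_big/uniq_perm.
- by rewrite filter_uniq // fset_uniq.
- rewrite map_inj_in_uniq ?fset_uniq // => U V.
  rewrite !fpowersetE !fsubsetD => /andP[_ dUT] /andP[_ dVT] eUV.
  by rewrite -(UDK _ dUT) eUV UDK.
- move=> U; rewrite mem_filter fpowersetE; apply/andP/mapP => [[sTU sUS]|].
    exists (U `\` T); first by rewrite fpowersetE fsetSD.
    by rewrite fsetUDl fsetDv fsetD0; apply/esym/fsetUidPr.
  case=> V; rewrite fpowersetE fsubsetD => /andP[sVS _] ->.
  by rewrite fsubsetUl fsubUset sTS.
Qed.

End FpowersetSums.

(** * The Grassmann algebra as a ring *)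

Section Inversions.
Local Open Scope nat_scope.

Definition ninv (T U : {fset nat}) : nat := \sum_(t <- T) count (fun u => u < t) U.

Lemma ninvE T U : ninv T U = \sum_(t <- T) \sum_(u <- U) (u < t).
Proof.
apply: eq_bigr => t _; rewrite -sum1_count big_mkcond.
by apply: eq_bigr => u _; case: ifP.
Qed.

Lemma ninvUl A B C : [disjoint A & B] -> ninv (A `|` B) C = ninv A C + ninv B C.
Proof. by move=> dAB; rewrite /ninv (perm_big _ (perm_fsetU_cat dAB)) big_cat. Qed.

Lemma ninvUr A B C : [disjoint B & C] -> ninv A (B `|` C) = ninv A B + ninv A C.
Proof.
move=> dBC; rewrite /ninv -big_split; apply: eq_bigr => t _.
by rewrite (seq.permP (perm_fsetU_cat dBC)) count_cat.
Qed.

Lemma ninvC A B : [disjoint A & B] -> ninv A B + ninv B A = #|`A| * #|`B|.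
Proof.
move=> /fdisjointP dAB; rewrite !ninvE [X in _ + X]exchange_big -big_split /=.
rewrite card_fset_sum1 big_distrl /=; apply: eq_big_seq => a aA.
rewrite -big_split card_fset_sum1 /= mul1n; apply: eq_big_seq => b bB.
have : a != b by apply: contraNneq (dAB _ aA) => ->.
by case: ltngtP.
Qed.

End Inversions.

Section GrassmannRing.
Variable K : fieldType.
Local Notation gsign := (gsign K).

Lemma gsignE T U : gsign T U = (-1) ^+ ninv T U.
Proof. by []. Qed.

Lemma gsign0l U : gsign fset0 U = 1.
Proof. by rewrite gsignE /ninv big_seq_fset0. Qed.

Lemma gsign0r T : gsign T fset0 = 1.
Proof. by rewrite gsignE /ninv big1_fset. Qed.

Lemma gsignC T U : [disjoint T & U] ->
  gsign U T = (-1) ^+ (#|`T| * #|`U|) * gsign T U.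
Proof.
by move=> dTU; rewrite !gsignE -(ninvC dTU) exprD mulrC signrMK.
Qed.

Lemma gsign_cocycle A B C :
  [disjoint A & B] -> [disjoint A & C] -> [disjoint B & C] ->
  gsign (A `|` B) C * gsign A B = gsign A (B `|` C) * gsign B C.
Proof.
move=> dAB dAC dBC; rewrite !gsignE -!exprD ninvUl // ninvUr //.
by rewrite addnAC [(ninv A C + _)%N]addnC.
Qed.

Lemma gmulA : associative (@gmul K).
Proof.
(* Both sides expand to a sum over decompositions S = T1 + U + V of
   a T1 * b U * c V, with signs that agree by [gsign_cocycle]. *)
move=> a b c; apply/esym/funext => S; rewrite /gmul.
under eq_bigr => T _ do rewrite mulr_sumr mulr_suml.
rewrite (eq_big_seq (fun T => \sum_(T1 <- fpowerset S | T1 `<=` T)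
   gsign T (S `\` T) * (gsign T1 (T `\` T1) * a T1 * b (T `\` T1)) * c (S `\` T)));
  last first.
  by move=> T; rewrite fpowersetE => TS; rewrite (big_fpowerset_sub _ TS).
rewrite (exchange_big_dep predT) //=; apply: eq_big_seq => T1; rewrite fpowersetE => T1S.
rewrite (big_fpowerset_sup _ T1S) mulr_sumr; apply: eq_big_seq => U.
rewrite fpowersetE => sU.
set V := (S `\` T1) `\` U.
have dT1U : [disjoint T1 & U] by move: sU; rewrite fsubsetD fdisjoint_sym => /andP[].
have dT1V : [disjoint T1 & V].
  by rewrite fdisjoint_sym (fdisjointWl (fsubsetDl _ U) (fdisjointDl S T1)).
have dUV : [disjoint U & V] by rewrite fdisjoint_sym fdisjointDl.
have -> : (T1 `|` U) `\` T1 = U.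
  by rewrite fsetDUl fsetDv fset0U; apply/fsetDidPl; rewrite fdisjoint_sym.
have -> : S `\` (T1 `|` U) = V by rewrite -fsetDDl.
have -> : S `\` T1 = U `|` V by rewrite fsetUDl fsetDv fsetD0; apply/esym/fsetUidPr.
transitivity (gsign (T1 `|` U) V * gsign T1 U * (a T1 * b U * c V)); first by ring.
by rewrite gsign_cocycle //; ring.
Qed.

Lemma gmul1l (a : gr K) : gmul (gscal 1) a = a.
Proof.
apply: funext => S; rewrite /gmul (big_fsetD1 fset0) ?fpowersetE ?fsub0set //.
rewrite gsign0l /gscal eqxx !mul1r fsetD0 big1_fset ?Monoid.mulm1 // => T.
by rewrite in_fsetD1 => /andP[/negbTE -> _] _; rewrite mulr0 mul0r.
Qed.

Lemma gmul1r (a : gr K) : gmul a (gscal 1) = a.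
Proof.
apply: funext => S; rewrite /gmul (big_fsetD1 S) ?fpowersetE ?fsubset_refl //.
rewrite fsetDv gsign0r /gscal eqxx mul1r mulr1 big1_fset ?Monoid.mulm1 // => T.
rewrite in_fsetD1 fpowersetE fsetD_eq0 => /andP[nTS sTS] _.
rewrite (_ : (S `<=` T) = false) ?mulr0 //.
by apply: contraNF nTS => sST; rewrite eqEfsubset sTS.
Qed.

(* The product [gmul] makes sense for arbitrary coordinate functions, so the
   ring structure lives on all of [gr K]. *)
Definition grass : Type := gr K.
HB.instance Definition _ := Choice.copy grass ({fset nat} -> K).

Lemma gaddA : associative (@gadd K : grass -> grass -> grass).
Proof. by move=> a b c; apply: funext => S; apply: addrA. Qed.
Lemma gaddC : commutative (@gadd K : grass -> grass -> grass).
Proof. by move=> a b; apply: funext => S; apply: addrC. Qed.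
Lemma gadd0l : left_id (gzero K : grass) (@gadd K).
Proof. by move=> a; apply: funext => S; apply: add0r. Qed.
Lemma gaddNl : left_inverse (gzero K : grass) (@gopp K) (@gadd K).
Proof. by move=> a; apply: funext => S; apply: addNr. Qed.

HB.instance Definition _ := GRing.isZmodule.Build grass gaddA gaddC gadd0l gaddNl.

Lemma gmulDl : left_distributive (@gmul K : grass -> grass -> grass) +%R.
Proof.
move=> a b c; apply: funext => S.
change (gmul (gadd a b) c S = gadd (gmul a c) (gmul b c) S).
by rewrite /gmul /gadd -big_split; apply: eq_bigr => T _; rewrite !mulrDr !mulrDl.
Qed.

Lemma gmulDr : right_distributive (@gmul K : grass -> grass -> grass) +%R.
Proof.
move=> a b c; apply: funext => S.
change (gmul a (gadd b c) S = gadd (gmul a b) (gmul a c) S).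
by rewrite /gmul /gadd -big_split; apply: eq_bigr => T _; rewrite !mulrDr.
Qed.

Lemma gscal1_neq0 : (gscal 1 : grass) != 0.
Proof. by apply/eqP => /(congr1 (@^~ fset0)) /eqP; rewrite /gscal eqxx oner_eq0. Qed.

HB.instance Definition _ := @GRing.Zmodule_isNzRing.Build grass
  (gscal 1) (@gmul K) gmulA gmul1l gmul1r gmulDl gmulDr gscal1_neq0.

End GrassmannRing.

Section Parity.
Variable K : fieldType.
Local Notation grass := (grass K).
Implicit Types (a b x y : grass) (S T : {fset nat}).

Lemma grass_mulE x y S : (x * y) S = gmul x y S. Proof. by []. Qed.
Lemma grass_addE x y S : (x + y) S = x S + y S. Proof. by []. Qed.
Lemma grass_oppE x S : (- x) S = - x S. Proof. by []. Qed.

Lemma grass_mul_rev x y S : (y * x) S = \sum_(T <- fpowerset S)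
  (-1) ^+ (#|`T| * #|`(S `\` T)|) * (gsign K T (S `\` T) * x T * y (S `\` T)).
Proof.
rewrite grass_mulE /gmul big_fpowerset_compl; apply: eq_big_seq => T.
rewrite fpowersetE => sTS; rewrite fsetDK // (@gsignC K T); last first.
  by rewrite fdisjoint_sym fdisjointDl.
by rewrite -!mulrA [y _ * _]mulrC.
Qed.

Definition even_part a : grass := fun S => if odd #|`S| then 0 else a S.
Definition odd_part a : grass := fun S => if odd #|`S| then a S else 0.

Lemma even_odd_part a : a = even_part a + odd_part a.
Proof.
apply: funext => S; rewrite grass_addE /even_part /odd_part.
by case: ifP; rewrite ?add0r ?addr0.
Qed.

Lemma card_fsetD_split S T : T `<=` S -> #|`S| = (#|`T| + #|`(S `\` T)|)%N.
Proof. by move=> sTS; rewrite cardfsDS // subnKC // fsubset_leq_card. Qed.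

Lemma even_part_central a b : even_part a * b = b * even_part a.
Proof.
apply: funext => S; rewrite grass_mul_rev grass_mulE /gmul; apply: eq_big_seq => T _.
rewrite /even_part; case: (boolP (odd #|`(S `\` T)|)) => oD; first by rewrite !mulr0.
by rewrite -signr_odd oddM (negbTE oD) andbF mul1r.
Qed.

Lemma odd_part_anticomm a b : odd_part b * odd_part a = - (odd_part a * odd_part b).
Proof.
apply: funext => S; rewrite grass_mul_rev grass_oppE grass_mulE /gmul -sumrN.
apply: eq_big_seq => T _; rewrite /odd_part.
case: (boolP (odd #|`T|)) => oT; last by rewrite !(mulr0, mul0r, oppr0).
case: (boolP (odd #|`(S `\` T)|)) => oD; last by rewrite !(mulr0, oppr0).
by rewrite -signr_odd oddM oT oD mulN1r.
Qed.

Lemma grass_commutator x y : x * y - y * x = (odd_part x * odd_part y) *+ 2.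
Proof.
rewrite [in LHS](even_odd_part x) [in LHS](even_odd_part y) !mulrDl !mulrDr.
rewrite (even_part_central y (even_part x)) (even_part_central y (odd_part x)).
rewrite -(even_part_central x (odd_part y)) (odd_part_anticomm x y).
by rewrite mulr2n; apply: funext => S; rewrite !(grass_addE, grass_oppE); ring.
Qed.

Lemma gevenP a : geven a <-> forall S, odd #|`S| -> a S = 0.
Proof.
split=> [ev S oS | ev S]; first by apply/eqP; apply: contraTT oS => /ev.
by apply: contra => oS; rewrite ev.
Qed.

Lemma geven_central a b : geven a -> a * b = b * a.
Proof.
move/gevenP=> ev; have -> : a = even_part a.
  by apply: funext => S; rewrite /even_part; case: ifP => // /ev.
exact: even_part_central.
Qed.

Lemma gevenD a b : geven a -> geven b -> geven (a + b).
Proof.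
by move=> /gevenP ea /gevenP eb; apply/gevenP => S oS; rewrite grass_addE ea ?eb ?addr0.
Qed.

Lemma gevenN a : geven a -> geven (- a).
Proof. by move=> /gevenP ea; apply/gevenP => S oS; rewrite grass_oppE ea ?oppr0. Qed.

Lemma geven_scal (c : K) : geven (gscal c).
Proof. by apply/gevenP => S; rewrite /gscal; case: eqP => // ->; rewrite cardfs0. Qed.

Lemma grass_mul_eq0 a b S :
  (forall T, T `<=` S -> a T * b (S `\` T) = 0) -> (a * b) S = 0.
Proof.
move=> ab0; rewrite grass_mulE /gmul big1_fset // => T; rewrite fpowersetE => sTS _.
by rewrite -mulrA ab0 ?mulr0.
Qed.

Lemma gevenM a b : geven a -> geven b -> geven (a * b).
Proof.
move=> /gevenP ea /gevenP eb; apply/gevenP => S oS; apply: grass_mul_eq0 => T sTS.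
move: oS; rewrite (card_fsetD_split sTS) oddD.
by case: (boolP (odd #|`T|)) => oT /= oD; [rewrite ea ?mul0r | rewrite eb ?mulr0].
Qed.

Lemma geven_odd_partM a b : geven (odd_part a * odd_part b).
Proof.
apply/gevenP => S oS; apply: grass_mul_eq0 => T sTS.
move: oS; rewrite (card_fsetD_split sTS) oddD /odd_part.
by case: (odd #|`T|); case: (odd #|`(S `\` T)|); rewrite ?mul0r ?mulr0.
Qed.

Lemma commutator_central x y z : (x * y - y * x) * z = z * (x * y - y * x).
Proof.
apply: geven_central; rewrite grass_commutator mulr2n.
by apply: gevenD; apply: geven_odd_partM.
Qed.

End Parity.

(** * Products of anticommuting elements *)

Definition swapn (x y k : nat) : nat := if k == x then y else if k == y then x else k.

Arguments swapn : simpl never.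

Lemma swapn_id x y k : k != x -> k != y -> swapn x y k = k.
Proof. by rewrite /swapn => /negbTE -> /negbTE ->. Qed.

Lemma swapnL x y : swapn x y x = y.
Proof. by rewrite /swapn eqxx. Qed.

Lemma swapnR x y : swapn x y y = x.
Proof. by rewrite /swapn eqxx; case: eqVneq. Qed.

Lemma swapnC x y : swapn x y =1 swapn y x.
Proof. by move=> k; rewrite /swapn; case: eqVneq => [->|]; case: eqVneq => // ->. Qed.

Section AnticommutingProducts.
Variables (R : ringType) (G : nat -> R).
Hypothesis G_anti : forall i j, G i * G j = - (G j * G i).

Lemma mulr_prod_anti (a : R) (r : seq nat) : (forall k, a * G k = - (G k * a)) ->
  a * \prod_(k <- r) G k = (-1) ^+ size r * (\prod_(k <- r) G k * a).
Proof.
move=> a_anti; elim: r => [|k r IHr]; first by rewrite big_nil expr0 !mul1r mulr1.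
rewrite big_cons mulrA a_anti mulNr -[G k * a * _]mulrA IHr /= exprS.
by rewrite mulN1r mulNr mulrA commr_sign !mulrA.
Qed.

Lemma prod_swap_anti (r1 r2 r3 : seq nat) x y :
  \prod_(k <- r1 ++ x :: r2 ++ y :: r3) G k =
  - \prod_(k <- r1 ++ y :: r2 ++ x :: r3) G k.
Proof.
rewrite !(big_cat, big_cons) /= -mulrN; congr (_ * _).
rewrite !mulrA (mulr_prod_anti _ (G_anti x)) (mulr_prod_anti _ (G_anti y)).
by rewrite -!mulrA [G x * (G y * _)]mulrA G_anti mulNr !mulrN -!mulrA.
Qed.

Lemma prod_swapn_anti m x y : x != y -> (x < m)%N -> (y < m)%N ->
  \prod_(0 <= k < m) G (swapn x y k) = - \prod_(0 <= k < m) G k.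
Proof.
wlog xy : x y / (x < y)%N => [wlog_xy nxy xm ym|_ xm ym].
  have [lt_xy|lt_yx|eq_xy] := ltngtP x y; first exact: wlog_xy.
    rewrite -(wlog_xy y x) 1?eq_sym //.
    by apply: eq_bigr => k _; rewrite swapnC.
  by rewrite eq_xy eqxx in nxy.
have iota_split : index_iota 0 m =
    iota 0 x ++ x :: iota x.+1 (y - x.+1) ++ y :: iota y.+1 (m - y.+1).
  rewrite /index_iota subn0.
  rewrite {1}(_ : m = x + ((y - x.+1).+1 + (m - y.+1).+1))%N; last by lia.
  by rewrite !iotaD /= (_ : x + (y - x.+1).+1 = y)%N //; lia.
rewrite -(big_map (swapn x y) predT G) iota_split map_cat /= map_cat /=.
rewrite !map_id_in ?swapnL ?swapnR.
- exact: prod_swap_anti.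
all: move=> k; rewrite mem_iota => k_range; apply: swapn_id; apply/eqP.
all: lia.
Qed.

End AnticommutingProducts.

(* [s] acting on indices, extended by the identity beyond [m]; this is the
   form in which the statement indexes [w_sigma(k)]. *)
Definition permn m (s : 'S_m) (k : nat) : nat :=
  if insub k is Some j then nat_of_ord (s j) else k.

Lemma permn_ord m (s : 'S_m) (j : 'I_m) : permn s j = s j.
Proof. by rewrite /permn valK. Qed.

Lemma permn_out m (s : 'S_m) k : (m <= k)%N -> permn s k = k.
Proof. by move=> mk; rewrite /permn insubF // ltnNge mk. Qed.

Lemma val_tperm m (x y j : 'I_m) : nat_of_ord (tperm x y j) = swapn x y j.
Proof.
case: tpermP => [->|->|/eqP jx /eqP jy]; rewrite ?swapnL ?swapnR //.
by rewrite swapn_id.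
Qed.

Lemma permn_tperm m (s : 'S_m) (x y : 'I_m) k :
  permn (tperm x y * s) k = permn s (swapn x y k).
Proof.
case: (ltnP k m) => [km | mk].
  by rewrite -[k]/(nat_of_ord (Ordinal km)) permn_ord permM -val_tperm permn_ord.
have [kx ky] : k != x /\ k != y.
  by split; apply: contraTneq mk => ->; rewrite -ltnNge ltn_ord.
by rewrite swapn_id // !permn_out.
Qed.

Lemma prod_permn_anti (R : ringType) (G : nat -> R) m (s : 'S_m) :
  (forall i j, G i * G j = - (G j * G i)) ->
  \prod_(0 <= k < m) G (permn s k) = (-1) ^+ odd_perm s * \prod_(0 <= k < m) G k.
Proof.
move=> G_anti; have [ts -> dts] := prod_tpermP s.
elim: ts dts => [_|t ts IHts /= /andP[dt dts]].
  rewrite big_nil odd_perm1 mul1r; apply: eq_bigr => k _.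
  case: (ltnP k m) => [km|/permn_out -> //].
  by rewrite -[k]/(nat_of_ord (Ordinal km)) permn_ord perm1.
rewrite big_cons odd_mul_tperm dt signr_addb /= mulN1r mulNr -IHts //.
under eq_bigr => k _ do rewrite permn_tperm.
by apply: (prod_swapn_anti (fun i j => G_anti (permn _ i) (permn _ j))).
Qed.

Section RingProducts.
Variable R : ringType.

Lemma prod_pairs (H : nat -> R) n :
  \prod_(i <- iota 0 n) (H i.*2 * H i.*2.+1) = \prod_(0 <= k < n.*2) H k.
Proof.
elim: n => [|n IHn]; first by rewrite big_nil big_geq.
rewrite -addn1 iotaD big_cat big_seq1 IHn addn1 doubleS.
by rewrite big_nat_recr //= big_nat_recr //= mulrA.
Qed.

Lemma prod_mul_central (I : eqType) (r : seq I) (a c : I -> R) :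
  (forall i x, c i * x = x * c i) ->
  \prod_(i <- r) (a i * c i) = \prod_(i <- r) c i * \prod_(i <- r) a i.
Proof.
move=> c_central; rewrite prodrM_comm; last by move=> i j _ _; apply/esym/c_central.
by apply: commr_prod => i _; apply/esym/c_central.
Qed.

End RingProducts.

Section GrassmannCommutators.
Variable K : fieldType.
Local Notation grass := (grass K).

Lemma prod_commutator_permn (x : nat -> grass) n (s : 'S_(n.*2)) :
  \prod_(i <- iota 0 n) (x (permn s i.*2) * x (permn s i.*2.+1)
                          - x (permn s i.*2.+1) * x (permn s i.*2)) =
  (-1) ^+ odd_perm s *
  \prod_(i <- iota 0 n) (x i.*2 * x i.*2.+1 - x i.*2.+1 * x i.*2).
Proof.
under eq_bigr do rewrite grass_commutator.
under [in RHS]eq_bigr do rewrite grass_commutator.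
rewrite !prodrMn (prod_pairs (fun k => odd_part (x (permn s k)))).
rewrite (prod_pairs (fun k => odd_part (x k))).
rewrite (@prod_permn_anti _ (fun k => odd_part (x k))) ?mulrnAr // => i j.
exact: odd_part_anticomm.
Qed.

Lemma grass_reorder_commutators (a x : nat -> grass) n (s : 'S_(n.*2)) :
  \prod_(i <- iota 0 n) (a i * (x (permn s i.*2) * x (permn s i.*2.+1)
                                - x (permn s i.*2.+1) * x (permn s i.*2))) * a n =
  (-1) ^+ odd_perm s *
  (\prod_(i <- iota 0 n) (x i.*2 * x i.*2.+1 - x i.*2.+1 * x i.*2) *
   \prod_(i <- iota 0 n.+1) a i).
Proof.
rewrite prod_mul_central => [|i y]; last exact: commutator_central.
by rewrite prod_commutator_permn -addn1 iotaD big_cat big_seq1 !mulrA.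
Qed.

End GrassmannCommutators.

(** * The algebra A of upper triangular matrices *)

Section UpperTriangular.
Variable K : fieldType.
Local Notation grass := (grass K).

Lemma Aeval2_ncprod phi (l : seq (ncpoly K)) :
  (Aeval phi (ncprod l)).2 = \prod_(p <- l) ((Aeval phi p).2 : grass).
Proof. by elim: l => [|p l IHl]; rewrite ?big_nil ?big_cons -?IHl. Qed.

Lemma Aeval11_geven phi : (forall i, geven (phi i).1.1) ->
  forall p : ncpoly K, geven (Aeval phi p).1.1.
Proof.
move=> phi_even; elim => [i|c|p IHp q IHq|p IHp|p IHp q IHq] /=.
- exact: phi_even.
- exact: geven_scal.
- exact: (gevenD IHp IHq).
- exact: (gevenN IHp).
- exact: (gevenM IHp IHq).
Qed.

Lemma Aeval11_nccomm phi (p q : ncpoly K) : (forall i, geven (phi i).1.1) ->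
  (Aeval phi (nccomm p q)).1.1 = 0 :> grass.
Proof.
move=> phi_even; pose a : grass := (Aeval phi p).1.1.
pose b : grass := (Aeval phi q).1.1; change (a * b - b * a = 0).
by rewrite (geven_central _ (Aeval11_geven (p := p) phi_even)) subrr.
Qed.

Lemma gmulE (a b : grass) : gmul a b = a * b. Proof. by []. Qed.
Lemma gaddE (a b : grass) : gadd a b = a + b. Proof. by []. Qed.
Lemma goppE (a : grass) : gopp a = - a. Proof. by []. Qed.
Lemma gzeroE : gzero K = 0 :> grass. Proof. by []. Qed.

Lemma gscal_sign (b : bool) : gscal ((-1) ^+ b : K) = (-1) ^+ b :> grass.
Proof.
case: b => //; apply: funext => S.
change (gscal (- 1 : K) S = - gscal (1 : K) S).
by rewrite /gscal; case: ifP; rewrite ?oppr0.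
Qed.

(* If the (1,1) entry of [c] vanishes, [u * (c * x)] only depends on the
   (2,2) entry of [x]. *)
Lemma Amul_corner0 (u c x y : algA K) (b : bool) :
  c.1.1 = 0 :> grass -> x.2 = (-1) ^+ b * (y.2 : grass) :> grass ->
  Aadd (Amul u (Amul c x)) (Aopp (Amul (Aconst ((-1) ^+ b)) (Amul u (Amul c y))))
  = Azero K.
Proof.
case: u c x y => [[u11 u12] u22] [[c11 c12] c22] [[x11 x12] x22] [[y11 y12] y22] /=.
move=> c11_0 x22E.
rewrite /Aadd /Amul /Aopp /Aconst /Azero /= !gmulE !gaddE !goppE gzeroE.
rewrite gscal_sign c11_0 x22E.
have sgnM (z w : grass) : z * ((-1) ^+ b * w) = (-1) ^+ b * (z * w).
  by rewrite mulrA commr_sign mulrA.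
by rewrite !(mul0r, mulr0, add0r, addr0) !sgnM oppr0 -mulrDr !subrr.
Qed.

End UpperTriangular.

Theorem lemma3p2 (K : fieldType) (charK0 : [pchar K] =i pred0)
  (n : nat) (hn : (0 < n)%N)
  (u : nat -> ncpoly K) (v1 v2 : ncpoly K) (w : nat -> ncpoly K)
  (s : 'S_(n.*2)) :
  let ws := fun k : nat =>
    match @insub nat (fun k => (k < n.*2)%N) 'I_(n.*2) k with
    | Some j => w (nat_of_ord (s j))
    | None => w k
    end in
  let f := ncprod ([:: u 0%N; nccomm v1 v2] ++
             flatten [seq [:: u i.+1; nccomm (ws i.*2) (ws i.*2.+1)] | i <- iota 0 n]
             ++ [:: u n.+1]) in
  let g := ncprod ([:: u 0%N; nccomm v1 v2] ++
             [seq nccomm (w i.*2) (w i.*2.+1) | i <- iota 0 n]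
             ++ [seq u i.+1 | i <- iota 0 n.+1]) in
  TA (ncsub f (NMul (NConst ((-1) ^+ odd_perm s)) g)).
Proof.
(* The identity holds in every characteristic and for n = 0 as well. *)
move=> ws f g phi phi_A.
have phi_even i : geven (phi i).1.1 by case: (phi_A i).
have wsE k : ws k = w (permn s k) by rewrite /ws /permn; case: insub.
apply: Amul_corner0; first exact: Aeval11_nccomm.
rewrite !Aeval2_ncprod !big_cat big_flatten !big_map big_seq1 /=.
under eq_bigr => i _ do rewrite big_cons big_seq1 !wsE.
exact: (grass_reorder_commutators (fun i => (Aeval phi (u i.+1)).2)
                                  (fun k => (Aeval phi (w k)).2)).
Qed.
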